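(* Let $G$ be a unit square graph with realization $f$, let $\mathcal{P}$ be a clique-partition of $V(G)$, and let $\simeq$ be the equivalence relation on $V(G)\cup\mathcal{M}(G)$ whose classes form the coarsest partition of $V(G)\cup\mathcal{M}(G)$ that is stable with respect to $G^*_{\mathcal{M}}$ and refines $\mathcal{P}\cup\{\mathcal{M}(G)\}$. If $C,D$ are distinct maximal cliques with $C\simeq D$, then $z_f(C)_i\cap z_f(D)_i=\emptyset$ for $i=1,2$.
   Context: A realization of $G$ is $f\colon V(G)\to\mathbb{R}^2$ with $vw\in E(G)$ iff $\|f(v)-f(w)\|_\infty\le1$ for distinct $v,w$; a unit square graph is a graph with a realization. A clique-partition is a partition of $V(G)$ all of whose parts are cliques. $\mathcal{M}(G)$ is the set of maximal cliques. $G^*_{\mathcal{M}}$ is the graph on $V(G)\sqcup\mathcal{M}(G)$ with edge set $E(G)\cup\{vC \mid C\in\mathcal{M}(G), v\in C\}$. A partition $\mathcal{Q}$ of the vertex set of a graph $H$ is stable if for all $X,Y\in\mathcal{Q}$ and $v,w\in X$, $|N_H(v)\cap Y|=|N_H(w)\cap Y|$. The center of a maximal clique $C$ is $z_f(C)=\{p\in\mathbb{R}^2\mid\forall v\in C:\|f(v)-p\|_\infty\le\tfrac12\}$, and $z_f(C)_i=\{p_i\mid p\in z_f(C)\}$ is its projection to the $i$-th coordinate. *)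

From HB Require Import structures.
From mathcomp Require Import all_boot all_order all_algebra.
Set Implicit Arguments. Unset Strict Implicit. Unset Printing Implicit Defensive.
Import Order.TTheory GRing.Theory Num.Theory.

Section Defs.
Variable V : finType.
Variable e : rel V.

Definition simple_graph := symmetric e /\ irreflexive e.

Definition is_clique (C : {set V}) : bool :=
  [forall v in C, forall w in C, (v != w) ==> e v w].

Definition is_maxclique (C : {set V}) : bool := maxset is_clique C.

Definition maxcliques : {set {set V}} := [set C | is_maxclique C].

Definition clique_partition (P : {set {set V}}) : Prop :=
  partition P [set: V] /\ {in P, forall C, is_clique C}.

(* vertex type of G*_M : V(G) ⊔ M(G), realised inside V + {set V} *)
Definition Tstar := (V + {set V})%type.

Definition Vstar : {set Tstar} :=
  [set inl v | v : V] :|: [set inr C | C in maxcliques].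

Definition estar (x y : Tstar) : bool :=
  match x, y with
  | inl v, inl w => e v w
  | inl v, inr C => (C \in maxcliques) && (v \in C)
  | inr C, inl v => (C \in maxcliques) && (v \in C)
  | inr _, inr _ => false
  end.

Definition stable (Q : {set {set Tstar}}) : Prop :=
  forall X Y, X \in Q -> Y \in Q -> forall v w, v \in X -> w \in X ->
    #|[set u in Y | estar v u]| = #|[set u in Y | estar w u]|.

Definition refines (Q Q' : {set {set Tstar}}) : Prop :=
  forall X, X \in Q -> exists2 Y, Y \in Q' & X \subset Y.

Definition base_partition (P : {set {set V}}) : {set {set Tstar}} :=
  [set [set inl v | v in B] | B : {set V} in P] :|: [set [set inr C | C in maxcliques]].

Definition coarsest_stable_refinement (P : {set {set V}}) (Q : {set {set Tstar}}) : Prop :=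
  [/\ partition Q Vstar, stable Q, refines Q (base_partition P) &
      forall Q', partition Q' Vstar -> stable Q' -> refines Q' (base_partition P) ->
        refines Q' Q].

Definition equiv_in (Q : {set {set Tstar}}) (x y : Tstar) : Prop :=
  exists2 X, X \in Q & (x \in X) && (y \in X).
End Defs.

Section Geom.
Variable R : realFieldType.
Local Open Scope ring_scope.

Definition dinf (p q : R * R) : R := Num.max `|p.1 - q.1| `|p.2 - q.2|.

Definition coord (p : R * R) (i : 'I_2) : R := if i == ord0 then p.1 else p.2.

Definition realization (V : finType) (e : rel V) (f : V -> R * R) : Prop :=
  forall v w, v != w -> (e v w <-> dinf (f v) (f w) <= 1).

Definition center (V : finType) (f : V -> R * R) (C : {set V}) (p : R * R) : Prop :=
  forall v, v \in C -> dinf (f v) p <= 2^-1.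

Definition center_proj (V : finType) (f : V -> R * R) (C : {set V}) (i : 'I_2) (x : R) : Prop :=
  exists2 p, center f C p & coord p i = x.
End Geom.

From Pilot Require Import Defs.
From HB Require Import structures.
From mathcomp Require Import all_boot all_order all_algebra.
From mathcomp Require Import lra.
Import Order.TTheory GRing.Theory Num.Theory.

Set Implicit Arguments. Unset Strict Implicit. Unset Printing Implicit Defensive.
Local Open Scope ring_scope.

(* Suppose the centers of C and D both contain points with the same
   i-th coordinate x, and let l be a vertex of C u D with least coordinate m on the
   other axis, say l in C.  Every vertex of C u D within distance 1 of l lies in the
   strip [m, m + 1] on that axis, so the point with coordinates x and m + 1/2 is a
   center of C together with any such vertex of D; by maximality of C, every
   neighbour of l in D already belongs to C.  If l is in D this gives D = C.
   Otherwise the class of l lies inside a clique of P, so within that class C has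
   strictly more neighbours (l itself) than D, contradicting stability since C and
   D lie in the same class. *)

Definition other (i : 'I_2) : 'I_2 := if i == ord0 then ord_max else ord0.

Lemma ord2_eq_other (i k : 'I_2) : k != i -> k = other i.
Proof.
by case: i => [[|[|i]] Hi] //; case: k => [[|[|k]] Hk] //= _; apply: val_inj.
Qed.

Section Plane.
Variable R : realFieldType.
Implicit Types (a b p : R * R) (x y r : R).

Definition axis_point (i : 'I_2) x y : R * R :=
  if i == ord0 then (x, y) else (y, x).

Lemma coord_axis_point (i : 'I_2) x y : Defs.coord (axis_point i x y) i = x.
Proof. by rewrite /axis_point /Defs.coord; case: (i == ord0). Qed.

Lemma coord_axis_point_other (i : 'I_2) x y :
  Defs.coord (axis_point i x y) (other i) = y.
Proof. by case: i => [[|[|i]] Hi]. Qed.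

Lemma dinf_leP a b r :
  reflect (forall k : 'I_2, `|Defs.coord a k - Defs.coord b k| <= r) (dinf a b <= r).
Proof.
rewrite /dinf ge_max; apply: (iffP andP) => [[h1 h2] k | h].
  by rewrite /Defs.coord; case: (k == ord0).
by split; [exact: (h ord0) | exact: (h ord_max)].
Qed.

Lemma dinf_xx a : dinf a a = 0.
Proof. by rewrite /dinf !subrr normr0 maxxx. Qed.

Lemma dinf_le_center a b p : dinf a p <= 2^-1 -> dinf b p <= 2^-1 -> dinf a b <= 1.
Proof.
move=> /dinf_leP ha /dinf_leP hb; apply/dinf_leP => k.
apply: le_trans (ler_distD (Defs.coord p k) _ _) _.
by rewrite (distrC (Defs.coord p k)); have := ha k; have := hb k; lra.
Qed.

Lemma dinf_window a l (j : 'I_2) :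
  Defs.coord l j <= Defs.coord a j -> dinf a l <= 1 ->
  `|Defs.coord a j - (Defs.coord l j + 2^-1)| <= 2^-1.
Proof.
move=> la /dinf_leP /(_ j); rewrite !ler_norml => /andP [_ h].
by apply/andP; split; lra.
Qed.

End Plane.

Lemma cliqueP (V : finType) (e : rel V) (C : {set V}) :
  reflect (forall v w, v \in C -> w \in C -> v != w -> e v w) (is_clique e C).
Proof.
apply: (iffP forallP) => [h v w vC wC | h v].
  by move/(_ v)/implyP/(_ vC)/forallP/(_ w)/implyP/(_ wC)/implyP: h.
apply/implyP => vC; apply/forallP => w; apply/implyP => wC.
by apply/implyP; exact: h.
Qed.

Lemma maxclique_sub_eq (V : finType) (e : rel V) (C D : {set V}) :
  C \in maxcliques e -> D \in maxcliques e -> D \subset C -> D = C.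
Proof.
by rewrite !inE => /maxsetp Ccl /maxsetsup Dmax /(Dmax _ Ccl).
Qed.

Lemma equiv_in_sym (V : finType) (Q : {set {set Tstar V}}) x y :
  equiv_in Q x y -> equiv_in Q y x.
Proof. by case=> X XQ /andP [xX yX]; exists X; rewrite ?xX ?yX. Qed.

Section Realization.
Variables (R : realFieldType) (V : finType) (e : rel V) (f : V -> R * R).
Hypothesis realf : realization e f.

Lemma center_is_clique (S : {set V}) p : center f S p -> is_clique e S.
Proof.
move=> hS; apply/cliqueP => v w vS wS nvw; apply/(realf nvw).
exact: dinf_le_center (hS v vS) (hS w wS).
Qed.

Lemma maxclique_center_mem (C : {set V}) d p :
  C \in maxcliques e -> center f (d |: C) p -> d \in C.
Proof.
rewrite inE => /maxsetsup Cmax /center_is_clique /Cmax /(_ (subsetUr _ _)) <-.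
exact: setU11.
Qed.

Lemma adj_dinf_le1 v w : e v w -> dinf (f v) (f w) <= 1.
Proof.
by have [<- _|nvw /(realf nvw)//] := eqVneq v w; rewrite dinf_xx ler01.
Qed.

Lemma clique_dinf_le1 (C : {set V}) v w :
  is_clique e C -> v \in C -> w \in C -> dinf (f v) (f w) <= 1.
Proof.
move=> /cliqueP Ccl vC wC; have [<-|nvw] := eqVneq v w; last exact/adj_dinf_le1/Ccl.
by rewrite dinf_xx ler01.
Qed.

Lemma center_axis_point (S : {set V}) (i : 'I_2) x y :
  (forall v, v \in S -> `|Defs.coord (f v) i - x| <= 2^-1) ->
  (forall v, v \in S -> `|Defs.coord (f v) (other i) - y| <= 2^-1) ->
  center f S (axis_point i x y).
Proof.
move=> hi hj v vS; apply/dinf_leP => k; have [->|/ord2_eq_other ->] := eqVneq k i.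
  by rewrite coord_axis_point; exact: hi.
by rewrite coord_axis_point_other; exact: hj.
Qed.

(* The common center of [d |: C] is the point with coordinate [coord p i] on axis
   [i] and [m + 1/2] on the other axis, [m] being the minimal coordinate of [l]. *)
Lemma shared_axis_absorb (C D : {set V}) (i : 'I_2) p q l :
  C \in maxcliques e -> center f C p -> center f D q ->
  Defs.coord p i = Defs.coord q i -> l \in C ->
  (forall v, v \in C :|: D -> Defs.coord (f l) (other i) <= Defs.coord (f v) (other i)) ->
  forall d, d \in D -> dinf (f d) (f l) <= 1 -> d \in C.
Proof.
move=> Cm hp hq pq lC lmin d dD dl.
have Ccl : is_clique e C by move: Cm; rewrite inE => /maxsetp.
pose y := Defs.coord (f l) (other i) + 2^-1.
apply: (maxclique_center_mem (p := axis_point i (Defs.coord p i) y) Cm).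
apply: center_axis_point => v.
  case/setU1P => [->|vC]; last by move/dinf_leP: (hp v vC).
  by rewrite pq; move/dinf_leP: (hq d dD).
case/setU1P => [->|vC]; apply: dinf_window.
- by apply: lmin; rewrite inE dD orbT.
- exact: dl.
- by apply: lmin; rewrite inE vC.
- exact: clique_dinf_le1 Ccl vC lC.
Qed.

End Realization.

Section Stability.
Variables (V : finType) (e : rel V) (P : {set {set V}}) (Q : {set {set Tstar V}}).
Hypotheses (Qpart : partition Q (Vstar e)) (Qref : refines Q (base_partition e P)).

Lemma vertex_class_in_block (l : V) :
  exists Y B, [/\ Y \in Q, B \in P, inl l \in Y & Y \subset [set inl v | v in B]].
Proof.
have : inl l \in cover Q.
  by case/and3P: Qpart => /eqP ->; rewrite inE imset_f.
case/bigcupP=> Y YQ lY; have [Z] := Qref YQ.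
rewrite inE => /orP [/imsetP [B BP ->] YB | ]; first by exists Y, B.
by rewrite inE => /eqP -> /subsetP /(_ _ lY) /imsetP [].
Qed.

(* The class of [l] lies in a clique of [P], so there [C] is adjacent to every
   vertex [D] is adjacent to, and also to [l]. *)
Lemma nequiv_in_strict_neighbourhood (C D : {set V}) (l : V) :
  {in P, forall B, is_clique e B} -> stable e Q ->
  C \in maxcliques e -> l \in C -> l \notin D ->
  (forall d, d \in D -> e d l -> d \in C) ->
  ~ equiv_in Q (inr C) (inr D).
Proof.
move=> Pcl Qstab Cm lC lD absorb [X XQ /andP [CX DX]].
have [Y [B [YQ BP lY /subsetP YB]]] := vertex_class_in_block l.
have : [set u in Y | estar e (inr D) u] \proper [set u in Y | estar e (inr C) u].
  apply/properP; split.
    apply/subsetP => u; rewrite !inE => /andP [uY].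
    have /imsetP [d dB uE] := YB u uY; subst u.
    rewrite /= uY Cm => /andP [_ dD]; apply: (absorb d dD).
    have lB : l \in B by have /imsetP [l' l'B [->]] := YB _ lY.
    have /cliqueP Bcl := Pcl B BP.
    by apply: (Bcl _ _ dB lB); apply: contraNneq lD => <-.
  by exists (inl l); rewrite !inE lY /= ?Cm ?lC // (negbTE lD) andbF.
by move/proper_card; rewrite (Qstab X Y XQ YQ _ _ CX DX) ltnn.
Qed.

End Stability.

Lemma shared_axis_contra (R : realFieldType) (V : finType) (e : rel V)
    (f : V -> R * R) (P : {set {set V}}) (Q : {set {set Tstar V}})
    (C D : {set V}) (i : 'I_2) p q l :
  realization e f -> clique_partition e P -> coarsest_stable_refinement e P Q ->
  C \in maxcliques e -> D \in maxcliques e -> C != D -> equiv_in Q (inr C) (inr D) ->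
  center f C p -> center f D q -> Defs.coord p i = Defs.coord q i -> l \in C ->
  (forall v, v \in C :|: D -> Defs.coord (f l) (other i) <= Defs.coord (f v) (other i)) ->
  False.
Proof.
move=> realf [_ Pcl] [Qpart Qstab Qref _] Cm Dm nCD CD hp hq pq lC lmin.
have absorb := shared_axis_absorb realf Cm hp hq pq lC lmin.
have [lD | lD] := boolP (l \in D).
  have Dcl : is_clique e D by move: Dm; rewrite inE => /maxsetp.
  suff DC : D \subset C by move: nCD; rewrite (maxclique_sub_eq Cm Dm DC) eqxx.
  by apply/subsetP => d dD; apply: absorb dD (clique_dinf_le1 realf Dcl dD lD).
apply: (nequiv_in_strict_neighbourhood Qpart Qref Pcl Qstab Cm lC lD _ CD).
by move=> d dD /(adj_dinf_le1 realf); exact: absorb.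
Qed.

Theorem mainTheorem12 (R : realFieldType) (V : finType) (e : rel V)
  (f : V -> R * R) (P : {set {set V}}) (Q : {set {set Tstar V}}) :
  simple_graph e ->
  realization e f ->
  clique_partition e P ->
  coarsest_stable_refinement e P Q ->
  forall C D : {set V}, C \in maxcliques e -> D \in maxcliques e -> C != D ->
  equiv_in Q (inr C) (inr D) ->
  forall i : 'I_2, ~ (exists x, center_proj f C i x /\ center_proj f D i x).
Proof.
move=> _ realf Pc Qc C D Cm Dm nCD CD i [x [[p hp px] [q hq qx]]].
have pq : Defs.coord p i = Defs.coord q i by rewrite px qx.
have [v0 v0CD] : exists v0, v0 \in C :|: D.
  by apply/set0Pn; apply: contra nCD; rewrite setU_eq0 => /andP [/eqP -> /eqP ->].
have [l lCD lmin] := arg_minP (fun v => Defs.coord (f v) (other i)) v0CD.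
case/setUP: lCD => [lC | lD].
  exact: shared_axis_contra realf Pc Qc Cm Dm nCD CD hp hq pq lC lmin.
apply: (shared_axis_contra realf Pc Qc Dm Cm _ (equiv_in_sym CD) hq hp (esym pq) lD).
  by rewrite eq_sym.
by move=> v; rewrite setUC; exact: lmin.
Qed.
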